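(* Let $$P_0=1-\tfrac29z-\tfrac13v+\tfrac16zv-\tfrac49w+\tfrac13vw-\tfrac16zvw,$$ $$P_1=\tfrac29z+\tfrac13v-\tfrac16yv-\tfrac16zv+\tfrac49w-\tfrac13uw+\tfrac16yuw-\tfrac13vw+\tfrac16yvw+\tfrac16zvw,$$ $$P_2=\tfrac16yv+\tfrac13uw-\tfrac16xuw-\tfrac16yuw-\tfrac16yvw.$$ Then for each $i=0,1,2$ and all $(x,y,z,u,v,w)\in[0,1]^6$ we have $P_i(x,y,z,u,v,w)\ge0$.
   Context: These are the positivity polynomials of the three-stage third-order explicit Runge--Kutta method with $a_{21}=\frac12$, $a_{31}=0$, $a_{32}=\frac34$ and $b=(\frac29,\frac13,\frac49)$: applying it to $u_k'=q_k(u,t)(u_{k-1}-u_k)/\Delta x$ gives $u^{n+1}_k=P_0u^n_k+P_1u^n_{k-1}+P_2u^n_{k-2}+P_3u^n_{k-3}$ with $P_3=\frac16xuw$, where $x=\xi^1_{k-2}$, $y=\xi^1_{k-1}$, $z=\xi^1_k$, $u=\xi^2_{k-1}$, $v=\xi^2_k$, $w=\xi^3_k$ and $\xi^j_\ell=\frac{\Delta t}{\Delta x}q_\ell(y^j,t_n+c_j\Delta t)$ for the stage values $y^j$. *)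

From Stdlib Require Import Reals.
Open Scope R_scope.

Definition P0 (x y z u v w : R) : R :=
  1 - 2/9*z - 1/3*v + 1/6*z*v - 4/9*w + 1/3*v*w - 1/6*z*v*w.

Definition P1 (x y z u v w : R) : R :=
  2/9*z + 1/3*v - 1/6*y*v - 1/6*z*v + 4/9*w - 1/3*u*w + 1/6*y*u*w
  - 1/3*v*w + 1/6*y*v*w + 1/6*z*v*w.

Definition P2 (x y z u v w : R) : R :=
  1/6*y*v + 1/3*u*w - 1/6*x*u*w - 1/6*y*u*w - 1/6*y*v*w.

Definition in01 (t : R) : Prop := 0 <= t <= 1.

(* Each P_i, being affine in every variable, can be rewritten as a combination
   with nonnegative coefficients of products of the variables t and of their
   complements 1 - t; on the unit cube every such product is nonnegative. *)
From Stdlib Require Import Reals Lra.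
Open Scope R_scope.

Lemma P0_expansion (x y z u v w : R) :
  P0 x y z u v w =
  1/3 + 5/18 * (1 - w) + 1/6 * (1 - w) * (1 - v) + 1/18 * (1 - z)
  + 1/6 * (1 - z) * (1 - v) + 1/6 * (1 - z) * v * w.
Proof. unfold P0; field. Qed.

Lemma P1_expansion (x y z u v w : R) :
  P1 x y z u v w =
  2/9 * z + 1/6 * v * (1 - w) * (1 - y) + 1/6 * v * (1 - w) * (1 - z)
  + 1/9 * w + 1/3 * w * (1 - u) + 1/6 * u * w * y.
Proof. unfold P1; field. Qed.

Lemma P2_expansion (x y z u v w : R) :
  P2 x y z u v w =
  1/6 * y * v * (1 - w) + 1/6 * u * w * (1 - x) + 1/6 * u * w * (1 - y).
Proof. unfold P2; field. Qed.

Ltac sum_of_products_nonneg :=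
  repeat match goal with
         | |- 0 <= _ + _ => apply Rplus_le_le_0_compat
         | |- 0 <= _ * _ => apply Rmult_le_pos
         end;
  unfold in01 in *; lra.

Lemma P0_nonneg (x y z u v w : R) :
  in01 z -> in01 v -> in01 w -> 0 <= P0 x y z u v w.
Proof.
  intros Hz Hv Hw.
  rewrite P0_expansion; sum_of_products_nonneg.
Qed.

Lemma P1_nonneg (x y z u v w : R) :
  in01 y -> in01 z -> in01 u -> in01 v -> in01 w -> 0 <= P1 x y z u v w.
Proof.
  intros Hy Hz Hu Hv Hw.
  rewrite P1_expansion; sum_of_products_nonneg.
Qed.

Lemma P2_nonneg (x y z u v w : R) :
  in01 x -> in01 y -> in01 u -> in01 v -> in01 w -> 0 <= P2 x y z u v w.
Proof.
  intros Hx Hy Hu Hv Hw.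
  rewrite P2_expansion; sum_of_products_nonneg.
Qed.

Theorem proposition3 :
  forall x y z u v w : R,
    in01 x -> in01 y -> in01 z -> in01 u -> in01 v -> in01 w ->
    0 <= P0 x y z u v w /\ 0 <= P1 x y z u v w /\ 0 <= P2 x y z u v w.
Proof.
  intros x y z u v w Hx Hy Hz Hu Hv Hw.
  split; [| split].
  - exact (P0_nonneg x y z u v w Hz Hv Hw).
  - exact (P1_nonneg x y z u v w Hy Hz Hu Hv Hw).
  - exact (P2_nonneg x y z u v w Hx Hy Hu Hv Hw).
Qed.
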